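(* Let $\mathcal{M}_0$ be the set of all probability distributions on $\mathbb{R}$ and $T:\mathcal{M}_0\to\mathcal{M}_0$. (i) $T\circ T^u=T^u\circ T$ for every increasing left-continuous $u:\mathbb{R}\to\mathbb{R}$ if and only if $T=T_d$ for some right-continuous $d\in\widehat{\mathcal{F}_D}$. (ii) $T\circ T_d=T_d\circ T$ for every right-continuous $d\in\widehat{\mathcal{F}_D}$ if and only if $T=T^u$ for some increasing left-continuous $u:\mathbb{R}\to\mathbb{R}$.
   Context: Increasing means non-decreasing. $\widehat{\mathcal{F}_D}$ is the set of increasing functions $d:[0,1]\to[0,1]$ with $d(0)=\lim_{x\downarrow0}d(x)=0$ and $d(1)=\lim_{x\uparrow1}d(x)=1$. For such $d$, $T_d:\mathcal{M}_0\to\mathcal{M}_0$ is $T_d(F)(x)=\lim_{y\downarrow x}d(F(y))$ (distributions identified with cdfs). For increasing $u$, $T^u(F)=F\circ u^{-1}$ is the distribution of $u(X)$ when $X\sim F$. *)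

(* Distributions on R are identified with cdfs. *)
From HB Require Import structures.
From mathcomp Require Import all_boot all_order all_algebra.
From mathcomp Require Import all_classical all_reals all_analysis.
Set Implicit Arguments. Unset Strict Implicit. Unset Printing Implicit Defensive.
Import Order.TTheory GRing.Theory Num.Theory.
Import numFieldNormedType.Exports.
Local Open Scope classical_set_scope.
Local Open Scope ring_scope.

Section Defs.
Variable R : realType.

Definition is_cdf (F : R -> R) : Prop :=
  {homo F : x y / x <= y} /\
  (forall x : R, F y @[y --> x^'+] --> F x) /\
  (F x @[x --> -oo] --> (0:R)) /\
  (F x @[x --> +oo] --> (1:R)).

Definition incr_leftcont (u : R -> R) : Prop :=
  {homo u : x y / x <= y} /\ (forall x : R, u y @[y --> x^'-] --> u x).

(* d belongs to \hat{F_D}; only the values of d on [0,1] matter. *)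
Definition in_FDhat (d : R -> R) : Prop :=
  {in `[0, 1]&, {homo d : x y / x <= y}} /\
  {in `[0, 1], forall x, d x \in `[0, 1]} /\
  d 0 = 0 /\ (d x @[x --> 0^'+] --> (0:R)) /\
  d 1 = 1 /\ (d x @[x --> 1^'-] --> (1:R)).

Definition rightcont01 (d : R -> R) : Prop :=
  forall x : R, 0 <= x < 1 -> d y @[y --> x^'+] --> d x.

Definition Td (d : R -> R) (F : R -> R) : R -> R :=
  fun x => lim (d (F y) @[y --> x^'+]).

(* T^u(F) = F o u^{-1}: the cdf of u(X) for X ~ F, i.e.
   x |-> P(u(X) <= x) = mu_F({t | u t <= x}).  For increasing u the set
   {t | u t <= x} is a down-set, whose F-probability is the supremum of F
   over it (0 if it is empty). *)
Definition Tu (u : R -> R) (F : R -> R) : R -> R :=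
  fun x => if pselect ([set t | u t <= x] !=set0)
           then sup (F @` [set t | u t <= x]) else 0.

End Defs.

From HB Require Import structures.
From mathcomp Require Import all_boot all_order all_algebra.
From mathcomp Require Import all_classical all_reals all_analysis.
From mathcomp Require Import lra ring.
Import Order.TTheory GRing.Theory Num.Theory.
Import numFieldNormedType.Exports.

(* (i) For [cut x] (0 up to x, 1 after), T^(cut x) F is the two-point law that
   only remembers F x.  Commuting with these T^u therefore forces
   (T F)(x) = (T U)(F x), with U the uniform cdf on [0, 1], so T = T_d for
   d = T U; every constraint on d (values in [0, 1], d 0 = 0, d 1 = 1, the
   one-sided limits, right-continuity) follows from d \o F being a cdf for all
   cdfs F.  Conversely T^u F (y) = F a where {u <= y} = (-oo, a] (closed by
   left-continuity of u), and such evaluations commute with composition by d.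
   (ii) For d = step p, T_d thresholds at level p and turns F into the point
   mass at its p-quantile.  So T maps point masses to point masses,
   delta_c to delta_(Tpoint c), and the p-quantile of T F is Tpoint applied to
   the p-quantile of F: these are exactly the quantiles of T^Tpoint F.
   Uniform laws show that Tpoint is increasing and left-continuous. *)

Set Implicit Arguments.
Unset Strict Implicit.
Unset Printing Implicit Defensive.
Local Open Scope classical_set_scope.
Local Open Scope ring_scope.

Section Cdf.
Variable R : realType.
Implicit Types (F : R -> R) (a b x y : R).

Lemma near_right_closed (P : R -> Prop) a :
  P a -> (\forall s \near a^'+, P s) -> \forall s \near a, a <= s -> P s.
Proof.
move=> Pa; rewrite near_withinE; apply: filterS => s Ps.
by rewrite le_eqVlt => /predU1P[<- //|/Ps].
Qed.

Lemma near_left_closed (P : R -> Prop) a :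
  P a -> (\forall s \near a^'-, P s) -> \forall s \near a, s <= a -> P s.
Proof.
move=> Pa; rewrite near_withinE; apply: filterS => s Ps.
by rewrite le_eqVlt => /predU1P[->//|/Ps].
Qed.

Lemma homo_right_cvg F x : {homo F : s t / s <= t} ->
  (forall b, F x < b -> \forall y \near x^'+, F y < b) ->
  F y @[y --> x^'+] --> F x.
Proof.
move=> Fhomo Fub; apply/cvgrPdist_lt => e e0; near=> y.
have Fxy : F x <= F y by apply: Fhomo; near: y; exact: nbhs_right_ge.
rewrite ler0_norm ?subr_le0 // opprB ltrBlDl; near: y; apply: Fub.
by rewrite ltrDl.
Unshelve. all: by end_near.
Qed.

Lemma cdf_homo F : is_cdf F -> {homo F : x y / x <= y}.
Proof. by case. Qed.

Lemma cdf_ge0 F x : is_cdf F -> 0 <= F x.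
Proof.
move=> hF; apply: (cvgr_to_le hF.2.2.1); near=> t; apply: cdf_homo hF _ _ _.
by near: t; apply: nbhs_ninfty_le; exact: num_real.
Unshelve. all: by end_near.
Qed.

Lemma cdf_le1 F x : is_cdf F -> F x <= 1.
Proof.
move=> hF; apply: (cvgr_to_ge hF.2.2.2); near=> t; apply: cdf_homo hF _ _ _.
by near: t; apply: nbhs_pinfty_ge; exact: num_real.
Unshelve. all: by end_near.
Qed.

Lemma cdf_ninfty_lt F e : is_cdf F -> 0 < e -> \forall t \near -oo, F t < e.
Proof. by move=> hF; exact: (cvgr_lt _ hF.2.2.1). Qed.

Lemma cdf_pinfty_gt F e : is_cdf F -> e < 1 -> \forall t \near +oo, e < F t.
Proof. by move=> hF; exact: (cvgr_gt _ hF.2.2.2). Qed.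

Lemma cdf_right_lt F x b : is_cdf F -> F x < b -> \forall y \near x^'+, F y < b.
Proof. by move=> hF; exact: (cvgr_lt _ (hF.2.1 x)). Qed.

End Cdf.

Section Tu.
Variable R : realType.
Implicit Types (F u : R -> R) (a b x y : R).

Lemma Tu_eq0 u F y : (forall t, y < u t) -> Tu u F y = 0.
Proof.
move=> h; rewrite /Tu; case: pselect => // -[t] /=.
by rewrite leNgt h.
Qed.

Lemma cdf_le_Tu u F y t : is_cdf F -> u t <= y -> F t <= Tu u F y.
Proof.
move=> hF ut; rewrite /Tu; case: pselect => [?|[]]; last by exists t.
apply: ub_le_sup; last by exists t.
by exists 1 => _ [s _ <-]; exact: cdf_le1.
Qed.

Lemma Tu_le u F y b : 0 <= b -> (forall t, u t <= y -> F t <= b) -> Tu u F y <= b.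
Proof.
move=> b0 h; rewrite /Tu; case: pselect => // -[t ut].
by apply: ge_sup; [exists (F t), t|move=> _ [s /h + <-]].
Qed.

Lemma Tu_ge0 u F y : is_cdf F -> 0 <= Tu u F y.
Proof.
move=> hF; have [[t ut]|nt] := pselect (exists t, u t <= y).
  exact: le_trans (cdf_ge0 t hF) (cdf_le_Tu hF ut).
by rewrite Tu_eq0 // => t; rewrite ltNge; apply/negP => ut; apply: nt; exists t.
Qed.

Lemma Tu_le1 u F y : is_cdf F -> Tu u F y <= 1.
Proof. by move=> hF; apply: Tu_le => // t _; exact: cdf_le1. Qed.

Lemma Tu_eq1 u F y : is_cdf F -> (forall t, u t <= y) -> Tu u F y = 1.
Proof.
move=> hF h; apply/le_anti; rewrite Tu_le1 //=.
by apply: (cvgr_to_le hF.2.2.2); apply: nearW => t; exact: cdf_le_Tu.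
Qed.

Lemma Tu_eq_cdf u F y a : is_cdf F -> (forall t, u t <= y <-> t <= a) ->
  Tu u F y = F a.
Proof.
move=> hF h; apply/le_anti; rewrite (cdf_le_Tu hF) ?andbT; last exact/h.
by apply: Tu_le; [exact: cdf_ge0|move=> t /h; exact: cdf_homo].
Qed.

Lemma Tu_le_cdf u F y t : {homo u : s t / s <= t} -> is_cdf F -> y < u t ->
  Tu u F y <= F t.
Proof.
move=> uhomo hF yu; apply: Tu_le => [|s us]; first exact: cdf_ge0.
apply: cdf_homo hF _ _ _; rewrite leNgt; apply/negP => ts.
by have := lt_le_trans yu (le_trans (uhomo _ _ (ltW ts)) us); rewrite ltxx.
Qed.

Lemma Tu_homo u F : is_cdf F -> {homo Tu u F : x y / x <= y}.
Proof.
move=> hF x y xy; apply: Tu_le => [|t ut]; first exact: Tu_ge0.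
exact: cdf_le_Tu hF (le_trans ut xy).
Qed.

(* Left-continuity of [u] is what makes the sublevel sets closed. *)
Lemma incr_leftcont_sublevel u y : incr_leftcont u ->
  [\/ forall t, y < u t, forall t, u t <= y |
      exists a, forall t, u t <= y <-> t <= a].
Proof.
move=> [uhomo ulc].
have [[t1 yt1]|nt1] := pselect (exists t, y < u t); last first.
  by apply: Or32 => t; rewrite leNgt; apply/negP => yt; apply: nt1; exists t.
have [[t0 t0y]|nt0] := pselect (exists t, u t <= y); last first.
  by apply: Or31 => t; rewrite ltNge; apply/negP => ty; apply: nt0; exists t.
apply: Or33; pose S := [set t | u t <= y].
have S0 : S !=set0 by exists t0.
have t1ub : ubound S t1.
  move=> t /= ut; rewrite leNgt; apply/negP => t1t.
  by have := lt_le_trans yt1 (le_trans (uhomo _ _ (ltW t1t)) ut); rewrite ltxx.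
have below t : t < sup S -> u t <= y.
  by move=> /(sup_gt S0) [s Ss ts]; exact: le_trans (uhomo _ _ (ltW ts)) Ss.
exists (sup S) => t; split => [ut|]; first by apply: ub_le_sup => //; exists t1.
rewrite le_eqVlt => /predU1P[->|/below //]; rewrite leNgt; apply/negP => yu.
suff /filter_ex[] : \forall s \near (sup S)^'-, False by [].
near=> s; have : y < u s by near: s; exact: (cvgr_gt _ (ulc (sup S))).
have sS : s < sup S by near: s; exact: nbhs_left_lt.
by rewrite ltNge below.
Unshelve. all: by end_near.
Qed.

Lemma Tu_cdf u F : incr_leftcont u -> is_cdf F -> is_cdf (Tu u F).
Proof.
move=> hu hF; have Tuhomo := Tu_homo u hF.
have above y t : y < u t -> \forall z \near y^'+, Tu u F z <= F t.
  move=> yu; near=> z; apply: Tu_le_cdf hu.1 hF _.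
  by near: z; exact: nbhs_right_lt.
split; [exact: Tuhomo|split; [move=> x|split]].
- apply: homo_right_cvg => // b Tub.
  case: (incr_leftcont_sublevel x hu) => [hlt|hle|[a ha]].
  + rewrite Tu_eq0 // in Tub; have /filter_ex[t Ftb] := cdf_ninfty_lt hF Tub.
    by near=> z; apply: le_lt_trans Ftb; near: z; exact: above.
  + rewrite Tu_eq1 // in Tub; near=> z; rewrite Tu_eq1 // => t.
    by apply: le_trans (hle t) _; near: z; exact: nbhs_right_ge.
  + rewrite (Tu_eq_cdf hF ha) in Tub.
    have /filter_ex[t [ta Ftb]] : \forall t \near a^'+, a < t /\ F t < b.
      by near=> t; split; near: t; [exact: nbhs_right_gt|exact: cdf_right_lt].
    near=> z; apply: le_lt_trans Ftb; near: z; apply: above.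
    by rewrite ltNge; apply/negP => /ha; rewrite leNgt ta.
- apply/cvgrPdist_lt => e e0; have /filter_ex[t Fte] := cdf_ninfty_lt hF e0.
  near=> y; rewrite sub0r normrN ger0_norm ?Tu_ge0 //; apply: le_lt_trans Fte.
  apply: Tu_le_cdf hu.1 hF _; near: y; apply: nbhs_ninfty_lt; exact: num_real.
- apply/cvgrPdist_lt => e e0.
  have /filter_ex[t Fte] : \forall t \near +oo, 1 - e < F t.
    by apply: cdf_pinfty_gt => //; rewrite gtrBl.
  near=> y; rewrite ger0_norm ?subr_ge0 ?Tu_le1 // ltrBlDr -ltrBlDl.
  apply: lt_le_trans Fte _.
  apply: cdf_le_Tu hF _; near: y; apply: nbhs_pinfty_ge; exact: num_real.
Unshelve. all: by end_near.
Qed.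

Lemma Tu_level u F p q x : incr_leftcont u -> is_cdf F -> 0 < p ->
  (forall t, (p <= F t) = (q <= t)) -> (p <= Tu u F x) = (u q <= x).
Proof.
move=> hu hF p0 hq; have [uqx|xuq] := leP (u q) x.
  by apply: le_trans (cdf_le_Tu hF uqx); rewrite hq.
apply/negbTE; rewrite -ltNge.
case: (incr_leftcont_sublevel x hu) => [hlt|hle|[a ha]].
- by rewrite Tu_eq0.
- by have := hle q; rewrite leNgt xuq.
- by rewrite (Tu_eq_cdf hF ha) ltNge hq; apply/negP => /ha; rewrite leNgt xuq.
Qed.

Lemma Tu_comp u d F : incr_leftcont u -> d 0 = 0 -> d 1 = 1 ->
  is_cdf F -> is_cdf (d \o F) -> Tu u (d \o F) = d \o Tu u F.
Proof.
move=> hu d0 d1 hF hdF; apply/funext => x /=.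
case: (incr_leftcont_sublevel x hu) => [hlt|hle|[a ha]].
- by rewrite !Tu_eq0.
- by rewrite !Tu_eq1.
- by rewrite (Tu_eq_cdf hF ha) (Tu_eq_cdf hdF ha).
Qed.

End Tu.

Section Td.
Variable R : realType.
Implicit Types (F d : R -> R) (a x y : R).

Lemma cvg_comp_at_right T (FF : set_system T) {FFF : Filter FF}
    (f : T -> R) (g : R -> R) a :
  g s @[s --> a^'+] --> g a -> (\forall t \near FF, a <= f t) ->
  f t @[t --> FF] --> a -> g (f t) @[t --> FF] --> g a.
Proof.
move=> ga fa fFa P Pga /=.
have gP : \forall s \near a, a <= s -> P (g s).
  by apply: near_right_closed; [exact: nbhs_singleton|exact: ga].
by apply: filterS2 fa (fFa _ gP) => t aft /(_ aft).
Qed.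

Lemma cvg_comp_at_left T (FF : set_system T) {FFF : Filter FF}
    (f : T -> R) (g : R -> R) a :
  g s @[s --> a^'-] --> g a -> (\forall t \near FF, f t <= a) ->
  f t @[t --> FF] --> a -> g (f t) @[t --> FF] --> g a.
Proof.
move=> ga fa fFa P Pga /=.
have gP : \forall s \near a, s <= a -> P (g s).
  by apply: near_left_closed; [exact: nbhs_singleton|exact: ga].
by apply: filterS2 fa (fFa _ gP) => t aft /(_ aft).
Qed.

Lemma FDhat_homo d F x y : in_FDhat d -> is_cdf F -> x <= y -> d (F x) <= d (F y).
Proof.
move=> [dhomo _] hF xy; apply: dhomo; last exact: cdf_homo.
  by rewrite in_itv /= cdf_ge0 ?cdf_le1.
by rewrite in_itv /= cdf_ge0 ?cdf_le1.
Qed.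

Lemma comp_right_cvg d F x : in_FDhat d -> rightcont01 d -> is_cdf F ->
  d (F y) @[y --> x^'+] --> d (F x).
Proof.
move=> hd hdr hF; have [Fx1|Fx1] := ltP (F x) 1.
  apply: cvg_comp_at_right; [|near=> y; apply: cdf_homo hF _ _ _|exact: hF.2.1].
    by apply: hdr; rewrite cdf_ge0.
  by near: y; exact: nbhs_right_ge.
apply: cvg_near_cst; near=> y; congr d; apply/le_anti.
rewrite (le_trans (cdf_le1 _ hF) Fx1) /=; apply: cdf_homo hF _ _ _.
by near: y; exact: nbhs_right_ge.
Unshelve. all: by end_near.
Qed.

Lemma comp_cdf d F : in_FDhat d -> rightcont01 d -> is_cdf F -> is_cdf (d \o F).
Proof.
move=> hd hdr hF; have [_ [_ [d0 [d0r [d1 d1l]]]]] := hd.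
split; first by move=> x y xy; exact: FDhat_homo hd hF xy.
split; first by move=> x; exact: comp_right_cvg hd hdr hF.
split; [rewrite -d0|rewrite -d1].
- apply: cvg_comp_at_right; [by rewrite d0| |exact: hF.2.2.1].
  by apply: nearW => t; exact: cdf_ge0.
- apply: cvg_comp_at_left; [by rewrite d1| |exact: hF.2.2.2].
  by apply: nearW => t; exact: cdf_le1.
Qed.

Lemma Td_comp d F : in_FDhat d -> rightcont01 d -> is_cdf F -> Td d F = d \o F.
Proof.
move=> hd hdr hF; apply/funext => x; apply: cvg_lim => //.
exact: comp_right_cvg hd hdr hF.
Qed.

Lemma Td_cdf d F : in_FDhat d -> rightcont01 d -> is_cdf F -> is_cdf (Td d F).
Proof. by move=> hd hdr hF; rewrite Td_comp //; exact: comp_cdf. Qed.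

Lemma Td_Tu_comm d u F : in_FDhat d -> rightcont01 d -> incr_leftcont u ->
  is_cdf F -> Td d (Tu u F) = Tu u (Td d F).
Proof.
move=> hd hdr hu hF; have [_ [_ [d0 [_ [d1 _]]]]] := hd.
rewrite (Td_comp hd hdr (Tu_cdf hu hF)) (Td_comp hd hdr hF).
by rewrite (Tu_comp hu d0 d1 hF (comp_cdf hd hdr hF)).
Qed.

End Td.

Section Examples.
Variable R : realType.
Implicit Types (F G d : R -> R) (a c l s x y : R).

Definition step c x : R := if c <= x then 1 else 0.

Definition uniform a l x : R :=
  if x < a then 0 else if x < a + l then (x - a) / l else 1.

Definition pareto x : R := if x < 1 then 0 else 1 - x^-1.

Definition cut x (t : R) : R := if t <= x then 0 else 1.

Lemma step_cdf c : is_cdf (step c).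
Proof.
rewrite /step; split; [move=> x y xy|split; [move=> x|split]].
- by case: (leP c x); case: (leP c y); lra.
- apply: cvg_near_cst; have [cx|xc] := leP c x; near=> y.
    suff -> : c <= y by [].
    by apply: le_trans cx _; near: y; exact: nbhs_right_ge.
  suff -> : (c <= y) = false by [].
  by apply/negbTE; rewrite -ltNge; near: y; exact: nbhs_right_lt.
- apply: cvg_near_cst; near=> y; suff -> : (c <= y) = false by [].
  apply/negbTE; rewrite -ltNge.
  by near: y; apply: nbhs_ninfty_lt; exact: num_real.
- apply: cvg_near_cst; near=> y; suff -> : c <= y by [].
  by near: y; apply: nbhs_pinfty_ge; exact: num_real.
Unshelve. all: by end_near.
Qed.

Lemma uniform_lt a l x : x < a -> uniform a l x = 0.
Proof. by rewrite /uniform => ->. Qed.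

Lemma uniform_mid a l x : a <= x < a + l -> uniform a l x = (x - a) / l.
Proof. by case/andP=> ax xl; rewrite /uniform ltNge ax xl. Qed.

Lemma uniform_ge a l x : 0 < l -> a + l <= x -> uniform a l x = 1.
Proof.
by move=> l0 alx; rewrite /uniform !ltNge alx (le_trans _ alx) // lerDl ltW.
Qed.

Lemma uniform_cdf a l : 0 < l -> is_cdf (uniform a l).
Proof.
move=> l0; split; [move=> x y xy|split; [move=> x|split]].
- rewrite /uniform; case: (ltP x a) => xa; case: (ltP y a) => ya;
    case: (ltP x (a + l)) => xl; case: (ltP y (a + l)) => yl; try lra.
  + by apply: divr_ge0; lra.
  + by rewrite ler_pM2r ?invr_gt0 //; lra.
  + by rewrite ler_pdivrMr //; lra.
- have [xa|ax] := ltP x a.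
    rewrite uniform_lt //; apply: cvg_near_cst; near=> y; apply: uniform_lt.
    by near: y; exact: nbhs_right_lt.
  have [xl|lx] := ltP x (a + l); last first.
    rewrite uniform_ge //; apply: cvg_near_cst; near=> y; apply: uniform_ge l0 _.
    by apply: le_trans lx _; near: y; exact: nbhs_right_ge.
  rewrite uniform_mid ?ax //.
  apply: cvg_trans (near_eq_cvg _) (cvg_at_right_filter _).
    near=> y; apply/esym/uniform_mid/andP; split.
      by apply: le_trans ax _; near: y; exact: nbhs_right_ge.
    by near: y; exact: nbhs_right_lt.
  by apply: cvgM; [apply: cvgB; [exact: cvg_id|exact: cvg_cst]|exact: cvg_cst].
- apply: cvg_near_cst; near=> y; apply: uniform_lt.
  by near: y; apply: nbhs_ninfty_lt; exact: num_real.
- apply: cvg_near_cst; near=> y; apply: uniform_ge l0 _.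
  by near: y; apply: nbhs_pinfty_ge; exact: num_real.
Unshelve. all: by end_near.
Qed.

Lemma uniform_level a l p x : 0 < l -> 0 < p < 1 ->
  (p <= uniform a l x) = (a + p * l <= x).
Proof.
move=> l0 /andP[p0 p1]; have pl : 0 < p * l < l by rewrite mulr_gt0 ?gtr_pMl.
have [xa|ax] := ltP x a; first by rewrite uniform_lt //; apply/idP/idP; lra.
have [xl|lx] := ltP x (a + l).
  by rewrite uniform_mid ?ax // ler_pdivlMr //; apply/idP/idP; lra.
by rewrite uniform_ge //; apply/idP/idP; lra.
Qed.

Lemma uniform01 s : 0 <= s <= 1 -> uniform 0 1 s = s.
Proof.
case/andP=> s0; rewrite le_eqVlt => /predU1P[->|s1].
  by rewrite uniform_ge ?add0r.
by rewrite uniform_mid ?add0r ?s0 // subr0 divr1.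
Qed.

Lemma pareto_cdf : is_cdf pareto.
Proof.
have pareto_ge x : 1 <= x -> pareto x = 1 - x^-1.
  by rewrite /pareto ltNge => ->.
split; [move=> x y xy|split; [move=> x|split]].
- rewrite /pareto; case: (ltP x 1) => x1; case: (ltP y 1) => y1; try lra.
    by rewrite subr_ge0 invf_le1 //; lra.
  by rewrite lerD2l lerN2 lef_pV2 ?posrE //; lra.
- have [x1|x1] := ltP x 1.
    rewrite /pareto x1; apply: cvg_near_cst; near=> y.
    suff -> : y < 1 by [].
    by near: y; exact: nbhs_right_lt.
  rewrite pareto_ge //; apply: cvg_trans (near_eq_cvg _) (cvg_at_right_filter _).
    near=> y; apply/esym/pareto_ge; apply: le_trans x1 _.
    by near: y; exact: nbhs_right_ge.
  apply: cvgB; first exact: cvg_cst.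
  by apply: cvgV; [rewrite gt_eqF //; lra|exact: cvg_id].
- apply: cvg_near_cst; near=> y; rewrite /pareto.
  suff -> : y < 1 by [].
  by near: y; apply: nbhs_ninfty_lt; exact: num_real.
- have : 1 - y^-1 @[y --> +oo] --> (1 : R) - 0.
    apply: cvgB; first exact: cvg_cst.
    apply/gtr0_cvgV0; last exact: cvg_id.
    by near=> y; near: y; apply: nbhs_pinfty_gt; exact: num_real.
  rewrite subr0; apply: cvg_trans; apply: near_eq_cvg; near=> y.
  by apply/esym/pareto_ge; near: y; apply: nbhs_pinfty_ge; exact: num_real.
Unshelve. all: by end_near.
Qed.

Lemma pareto_inv y : 0 <= y < 1 -> pareto (1 - y)^-1 = y.
Proof.
case/andP=> y0 y1; have y1' : 0 < 1 - y by rewrite subr_gt0.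
by rewrite /pareto ltNge invf_ge1 ?lerBlDr ?lerDl // y0 invrK opprB addrC subrK.
Qed.

Lemma cut_incr_leftcont x : incr_leftcont (cut x).
Proof.
split; first by move=> s t st; rewrite /cut; case: (leP s x); case: (leP t x); lra.
move=> t; apply: cvg_near_cst; rewrite /cut; have [tx|xt] := leP t x; near=> s.
  suff -> : s <= x by [].
  by apply: le_trans tx; near: s; exact: nbhs_left_le.
suff -> : (s <= x) = false by [].
by apply/negbTE; rewrite -ltNge; near: s; exact: nbhs_left_gt.
Unshelve. all: by end_near.
Qed.

Lemma Tu_cut F x y : is_cdf F ->
  Tu (cut x) F y = if y < 0 then 0 else if y < 1 then F x else 1.
Proof.
move=> hF; rewrite /cut; have [y0|y0] := ltP y 0.
  by apply: Tu_eq0 => t; case: ifP => _; lra.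
have [y1|y1] := ltP y 1.
  by apply: Tu_eq_cdf => // t; case: ifP => tx; split => //; lra.
by apply: Tu_eq1 => // t; case: ifP => _; lra.
Qed.

Lemma Tu_cut_eq F G x y : is_cdf F -> is_cdf G -> F x = G y ->
  Tu (cut x) F = Tu (cut y) G.
Proof. by move=> hF hG FG; apply/funext => z; rewrite !Tu_cut // FG. Qed.

Lemma Tu_cut0 F x : is_cdf F -> Tu (cut x) F 0 = F x.
Proof. by move=> hF; rewrite Tu_cut // ltxx ltr01. Qed.

Lemma FDhat_of_comp_cdf d : (forall F, is_cdf F -> is_cdf (d \o F)) ->
  in_FDhat d /\ rightcont01 d.
Proof.
move=> hd; pose G := d \o uniform 0 1.
have hG : is_cdf G by apply: hd; exact: uniform_cdf.
have Gd s : 0 <= s <= 1 -> G s = d s by move=> s01; rewrite /G /= uniform01.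
have d0 : d 0 = 0.
  apply: (cvg_unique (T:=R) _ _ hG.2.2.1) => //=; apply: cvg_near_cst; near=> t.
  have t0 : t < 0 by near: t; apply: nbhs_ninfty_lt; exact: num_real.
  by rewrite /G /= uniform_lt.
have d1 : d 1 = 1.
  apply: (cvg_unique (T:=R) _ _ hG.2.2.2) => //=; apply: cvg_near_cst; near=> t.
  have t1 : 0 + 1 <= t.
    by rewrite add0r; near: t; apply: nbhs_pinfty_ge; exact: num_real.
  by rewrite /G /= uniform_ge.
have drc : rightcont01 d.
  move=> x /andP[x0 x1]; rewrite -Gd ?x0 ?ltW //.
  apply: cvg_trans (near_eq_cvg _) (hG.2.1 x); near=> y; apply: Gd.
  apply/andP; split; first by apply: le_trans x0 _; near: y; exact: nbhs_right_ge.
  by apply: ltW; near: y; exact: nbhs_right_lt.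
split=> //; split.
  move=> s t; rewrite !in_itv /= => s01 t01 st.
  by rewrite -!Gd //; exact: cdf_homo.
split.
  by move=> s; rewrite !in_itv /= => s01; rewrite -Gd // cdf_ge0 ?cdf_le1.
split=> //; split.
  by rewrite -[X in _ --> X]d0; apply: drc; rewrite lexx ltr01.
(* [pareto] maps (1 - y)^-1 back to y, carrying the limit at +oo of the cdf
   [d \o pareto] to the left limit of d at 1. *)
split=> //; have hP := hd _ pareto_cdf.
have pos : \forall y \near (1 : R)^'-, 0 < 1 - y.
  by near=> y; rewrite subr_gt0; near: y; exact: nbhs_left_lt.
have : (fun y : R => (1 - y)^-1) @ 1^'- --> +oo.
  apply/(cvgrVy pos).
  rewrite -(subrr 1); apply: cvgB; first exact: cvg_cst.
  by apply: cvg_at_left_filter; exact: cvg_id.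
move=> /cvg_comp /(_ hP.2.2.2); apply: cvg_trans; apply: near_eq_cvg; near=> y.
have y01 : 0 <= y < 1.
  apply/andP; split; last by near: y; exact: nbhs_left_lt.
  by near: y; apply: nbhs_left_ge; exact: ltr01.
by rewrite /= pareto_inv.
Unshelve. all: by end_near.
Qed.

End Examples.

Section Quantiles.
Variable R : realType.
Implicit Types (F : R -> R) (a b c p q x y : R).

Lemma cdf_quantile F p : is_cdf F -> 0 < p < 1 ->
  exists q, forall t, (p <= F t) = (q <= t).
Proof.
move=> hF /andP[p0 p1]; pose S := [set t | F t < p].
have /filter_ex[t0 Ft0] := cdf_ninfty_lt hF p0.
have /filter_ex[t1 Ft1] := cdf_pinfty_gt hF p1.
have Sub : has_ubound S.
  exists t1 => t /= Ftp; rewrite leNgt; apply/negP => t1t.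
  by have := lt_trans Ft1 (le_lt_trans (cdf_homo hF (ltW t1t)) Ftp); rewrite ltxx.
have above t : sup S < t -> p <= F t.
  by move=> St; rewrite leNgt; apply/negP => /(ub_le_sup Sub); rewrite leNgt St.
exists (sup S) => t; apply/idP/idP => [pFt|].
  rewrite leNgt; apply/negP => /(sup_gt (ex_intro _ t0 Ft0))[s /= Fsp ts].
  by have := le_lt_trans (cdf_homo hF (ltW ts)) Fsp; rewrite ltNge pFt.
rewrite le_eqVlt => /predU1P[<-|/above //]; rewrite leNgt; apply/negP => FSp.
suff /filter_ex[s [/above pFs Fsp]] :
    \forall s \near (sup S)^'+, sup S < s /\ F s < p.
  by move: pFs; rewrite leNgt Fsp.
by near=> s; split; near: s; [exact: nbhs_right_gt|exact: cdf_right_lt].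
Unshelve. all: by end_near.
Qed.

Lemma eq_of_levels a b : 0 <= a <= 1 -> 0 <= b <= 1 ->
  (forall p, 0 < p < 1 -> (p <= a) = (p <= b)) -> a = b.
Proof.
move=> /andP[a0 a1] /andP[b0 b1] h.
have split_at x y : 0 <= x -> y <= 1 -> x < y ->
    0 < (x + y) / 2 < 1 /\ (x + y) / 2 <= y /\ ~~ ((x + y) / 2 <= x).
  by move=> x0 y1 xy; rewrite -ltNge; do !split; lra.
apply/le_anti/andP; split; rewrite leNgt; apply/negP => lt.
  have [/h + [pa /negbTE pb]] := split_at _ _ b0 a1 lt.
  by rewrite pa pb.
have [/h + [pb /negbTE pa]] := split_at _ _ a0 b1 lt.
by rewrite pa pb.
Qed.

Lemma step_FDhat p : 0 < p < 1 -> in_FDhat (step p) /\ rightcont01 (step p).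
Proof.
move=> /andP[p0 p1]; have hs := step_cdf p.
split; last by move=> x _; exact: hs.2.1.
split; first by move=> x y _ _; exact: cdf_homo.
split; first by move=> x _; rewrite in_itv /= cdf_ge0 ?cdf_le1.
split; first by rewrite /step leNgt p0.
split.
  apply: cvg_near_cst; near=> y; rewrite /step; suff -> : (p <= y) = false by [].
  by apply/negbTE; rewrite -ltNge; near: y; exact: nbhs_right_lt.
split; first by rewrite /step (ltW p1).
apply: cvg_near_cst; near=> y; rewrite /step; suff -> : p <= y by [].
by near: y; exact: nbhs_left_ge.
Unshelve. all: by end_near.
Qed.

Lemma step_comp F p q : (forall t, (p <= F t) = (q <= t)) -> step p \o F = step q.
Proof. by move=> hq; apply/funext => t; rewrite /step /= hq. Qed.

Lemma step_comp_step p c : 0 < p <= 1 -> step p \o step c = step c.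
Proof.
case/andP=> p0 p1; apply/funext => x; rewrite /step /=.
by case: (c <= x); rewrite ?p1 // leNgt p0.
Qed.

Lemma eq_step a b x y : step a x = step b y -> (a <= x) = (b <= y).
Proof.
rewrite /step; case: (a <= x); case: (b <= y) => // /eqP.
  by rewrite oner_eq0.
by rewrite eq_sym oner_eq0.
Qed.

End Quantiles.

Section TuCommuting.
Variable R : realType.
Implicit Types (F : R -> R) (x : R).

Variable T : (R -> R) -> (R -> R).
Hypothesis T_cdf : forall F, is_cdf F -> is_cdf (T F).
Hypothesis T_Tu : forall u, incr_leftcont u ->
  forall F, is_cdf F -> T (Tu u F) = Tu u (T F).

Lemma Tu_commuting_comp F : is_cdf F -> T F = T (uniform 0 1) \o F.
Proof.
move=> hF; apply/funext => x /=.
(* T F x = T^(cut x) (T F) 0 = T (T^(cut x) F) 0 = T (T^(cut (F x)) U) 0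
         = T^(cut (F x)) (T U) 0 = T U (F x) *)
have hU : is_cdf (uniform 0 1 : R -> R) by exact: uniform_cdf.
have F01 : 0 <= F x <= 1 by rewrite cdf_ge0 ?cdf_le1.
rewrite -(Tu_cut0 x (T_cdf hF)) -(T_Tu (cut_incr_leftcont x) hF).
rewrite (@Tu_cut_eq _ _ _ x (F x) hF hU) ?uniform01 //.
by rewrite (T_Tu (cut_incr_leftcont _) hU) Tu_cut0 //; exact: T_cdf.
Qed.

Lemma Tu_commuting_is_Td :
  exists d, in_FDhat d /\ rightcont01 d /\ forall F, is_cdf F -> T F = Td d F.
Proof.
have [hd hdr] : in_FDhat (T (uniform 0 1)) /\ rightcont01 (T (uniform 0 1)).
  apply: FDhat_of_comp_cdf => F hF.
  by rewrite -Tu_commuting_comp //; exact: T_cdf.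
exists (T (uniform 0 1)); do 2!split => //.
by move=> F hF; rewrite Td_comp // Tu_commuting_comp.
Qed.

End TuCommuting.

Section TdCommuting.
Variable R : realType.
Implicit Types (F : R -> R) (a c l p q x y : R).

Variable T : (R -> R) -> (R -> R).
Hypothesis T_cdf : forall F, is_cdf F -> is_cdf (T F).
Hypothesis T_Td : forall d, in_FDhat d -> rightcont01 d ->
  forall F, is_cdf F -> T (Td d F) = Td d (T F).

Lemma T_step_comp p F : 0 < p < 1 -> is_cdf F -> T (step p \o F) = step p \o T F.
Proof.
move=> hp hF; have [hd hdr] := step_FDhat hp.
rewrite -(Td_comp hd hdr hF) -(Td_comp hd hdr (T_cdf hF)).
exact: T_Td.
Qed.

Lemma T_step_is_step c : exists q, T (step c) = step q.
Proof.
have half : 0 < (2^-1 : R) < 1 by apply/andP; split; lra.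
have [q hq] := cdf_quantile (T_cdf (step_cdf c)) half.
exists q; rewrite -(step_comp hq) -T_step_comp ?step_comp_step //.
  by case/andP: half => -> /ltW ->.
exact: step_cdf.
Qed.

Definition Tpoint c : R := xget 0 [set q | T (step c) = step q].

Lemma T_step c : T (step c) = step (Tpoint c).
Proof. exact: (xgetPex 0 (T_step_is_step c)). Qed.

Lemma T_level F p q x : 0 < p < 1 -> is_cdf F ->
  (forall t, (p <= F t) = (q <= t)) -> (p <= T F x) = (Tpoint q <= x).
Proof.
move=> hp hF hq; apply: eq_step.
(* step p \o T F = T (step p \o F) = T (step q) = step (Tpoint q) *)
by rewrite -[LHS]/((step p \o T F) x) -T_step_comp // (step_comp hq) T_step.
Qed.

Lemma T_uniform_level a l p x : 0 < l -> 0 < p < 1 ->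
  (p <= T (uniform a l) x) = (Tpoint (a + p * l) <= x).
Proof.
move=> l0 hp; apply: T_level => // [|t]; first exact: uniform_cdf.
exact: uniform_level.
Qed.

Lemma Tpoint_uniform_homo a l p q : 0 < l -> 0 < p -> p <= q -> q < 1 ->
  Tpoint (a + p * l) <= Tpoint (a + q * l).
Proof.
move=> l0 p0 pq q1.
rewrite -T_uniform_level ?p0 ?(le_lt_trans pq q1) //; apply: (le_trans pq).
by rewrite T_uniform_level ?lexx // (lt_le_trans p0 pq) q1.
Qed.

Lemma Tpoint_homo : {homo Tpoint : c1 c2 / c1 <= c2}.
Proof.
(* c1 and c2 are the p- and (1 - p)-quantiles of [uniform (c1 - 1) l]. *)
move=> c1 c2 c12; pose l := c2 - c1 + 2; pose p := l^-1.
have l0 : 0 < l by rewrite /l; lra.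
have pl : p * l = 1 by rewrite mulVf ?gt_eqF.
have p0 : 0 < p by rewrite invr_gt0.
have p2 : p <= 2^-1 by rewrite lef_pV2 ?posrE /l; lra.
have pq : p <= 1 - p by lra.
have q1 : 1 - p < 1 by lra.
have e1 : c1 - 1 + p * l = c1 by rewrite pl subrK.
have e2 : c1 - 1 + (1 - p) * l = c2 by rewrite mulrBl pl mul1r /l; ring.
by have := Tpoint_uniform_homo (c1 - 1) l0 p0 pq q1; rewrite e1 e2.
Qed.

Lemma Tpoint_left_cvg c : Tpoint y @[y --> c^'-] --> Tpoint c.
Proof.
(* c is the 1/2-quantile of [uniform (c - 1) 2]; a level p between G x and
   1/2 has a quantile below c that Tpoint sends above x = Tpoint c - e. *)
apply/cvgrPdist_lt => e e0.
have l0 : (0 : R) < 2 by [].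
pose G := T (uniform (c - 1) 2).
have G0 x : 0 <= G x by apply: cdf_ge0; apply: T_cdf; exact: uniform_cdf.
have mid : c - 1 + 2^-1 * 2 = c by rewrite mulVf ?pnatr_eq0 //; ring.
pose x := Tpoint c - e.
have Gx : G x < 2^-1.
  have half : 0 < (2^-1 : R) < 1 by apply/andP; split; lra.
  rewrite ltNge (T_uniform_level _ _ l0 half) mid.
  by rewrite -ltNge /x; lra.
pose p := (G x + 2^-1) / 2.
have hp : 0 < p < 1 by have Gx0 := G0 x; apply/andP; split; rewrite /p; lra.
have xq : x < Tpoint (c - 1 + p * 2).
  by rewrite ltNge -T_uniform_level // -/G -ltNge /p; lra.
have qc : c - 1 + p * 2 < c by rewrite /p; lra.
near=> y.
have yc : y < c by near: y; exact: nbhs_left_lt.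
have qy : c - 1 + p * 2 < y by near: y; exact: nbhs_left_gt.
have Tyc := Tpoint_homo (ltW yc); have Tqy := Tpoint_homo (ltW qy).
by rewrite ger0_norm ?subr_ge0 // /x in xq *; lra.
Unshelve. all: by end_near.
Qed.

Lemma Tpoint_incr_leftcont : incr_leftcont Tpoint.
Proof. by split; [exact: Tpoint_homo|exact: Tpoint_left_cvg]. Qed.

Lemma Td_commuting_is_Tu F : is_cdf F -> T F = Tu Tpoint F.
Proof.
move=> hF; have hTF := T_cdf hF; apply/funext => x; apply: eq_of_levels.
- by rewrite cdf_ge0 ?cdf_le1.
- by rewrite Tu_ge0 ?Tu_le1.
move=> p hp; have [q hq] := cdf_quantile hF hp.
rewrite (T_level x hp hF hq) (Tu_level x Tpoint_incr_leftcont hF _ hq) //.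
by case/andP: hp.
Qed.

End TdCommuting.

Theorem proposition5 (R : realType) (T : (R -> R) -> (R -> R))
    (hT : forall F, is_cdf F -> is_cdf (T F)) :
  ((forall u, incr_leftcont u ->
      forall F, is_cdf F -> T (Tu u F) = Tu u (T F)) <->
   (exists d, in_FDhat d /\ rightcont01 d /\
      forall F, is_cdf F -> T F = Td d F))
  /\
  ((forall d, in_FDhat d -> rightcont01 d ->
      forall F, is_cdf F -> T (Td d F) = Td d (T F)) <->
   (exists u, incr_leftcont u /\
      forall F, is_cdf F -> T F = Tu u F)).
Proof.
split; split.
- exact: Tu_commuting_is_Td.
- move=> [d [hd [hdr hTd]]] u hu F hF.
  rewrite (hTd _ (Tu_cdf hu hF)) (hTd _ hF); exact: Td_Tu_comm.
- move=> hc; exists (Tpoint T); split.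
    exact: Tpoint_incr_leftcont hT hc.
  exact: Td_commuting_is_Tu hT hc.
- move=> [u [hu hTu]] d hd hdr F hF.
  rewrite (hTu _ (Td_cdf hd hdr hF)) (hTu _ hF); symmetry; exact: Td_Tu_comm.
Qed.
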